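(* Let $\mathcal{A}$ be an automaton over $\Sigma$. Then there exists an automaton $\mathcal{B}$ over $\Sigma$ such that $\mathfrak{J}_{\exists\boxplus}(\mathcal{B})=\mathfrak{J}(\mathcal{A})$.
   Context: Automata are nondeterministic B\''uchi automata over infinite words; $\mathfrak{L}(\mathcal{A})$ is the accepted language. For $w\in\Sigma^\omega$, $\Psi(w)\in\mathbb{N}_\infty^\Sigma$ gives the number of occurrences of each letter ($\infty$ if infinite); for finite $x$, $\Psi(x)\in\mathbb{N}^\Sigma$. $w\sim w'$ iff $\Psi(w)=\Psi(w')$; $\mathfrak{J}(\mathcal{A})=\{w:\exists w'\sim w,\ w'\in\mathfrak{L}(\mathcal{A})\}$. For $k\ge1$, $w\sim_{k\boxplus}w'$ means $w=x_1x_2\cdots$, $w'=y_1y_2\cdots$ with $|x_i|=|y_i|=k$ and $\Psi(x_i)=\Psi(y_i)$. $\mathfrak{J}_{\exists\boxplus}(\mathcal{A})=\{w\in\Sigma^\omega:\exists k\ge1\ \exists w'\sim_{k\boxplus}w,\ w'\in\mathfrak{L}(\mathcal{A})\}$. *)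

From mathcomp Require Import all_boot.
Set Implicit Arguments. Unset Strict Implicit. Unset Printing Implicit Defensive.

Definition oword (Sigma : Type) := nat -> Sigma.

Unset Implicit Arguments.
Record automaton (Sigma : finType) := Automaton {
  state : finType;
  init : pred state;
  trans : state -> Sigma -> state -> bool;
  acc : pred state
}.
Set Implicit Arguments.
Arguments state {Sigma}.
Arguments init {Sigma}.
Arguments trans {Sigma}.
Arguments acc {Sigma}.

Definition accepting_run (Sigma : finType) (A : automaton Sigma)
  (w : oword Sigma) (r : nat -> state A) : Prop :=
  init A (r 0) /\
  (forall i, trans A (r i) (w i) (r i.+1)) /\
  (forall n, exists i, n <= i /\ acc A (r i)).

Arguments accepting_run {Sigma} A w r.

Definition accepts (Sigma : finType) (A : automaton Sigma) (w : oword Sigma) : Prop :=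
  exists r, accepting_run A w r.

Definition occ (Sigma : finType) (w : oword Sigma) (a : Sigma) (m k : nat) : nat :=
  \sum_(j < k) (w (m + j) == a).

(* Psi(w)(a) = v, with v : option nat, None standing for infinity:
   Some n  : a occurs exactly n times in w;
   None    : a occurs infinitely often in w. *)
Definition parikh_is (Sigma : finType) (w : oword Sigma) (a : Sigma)
  (v : option nat) : Prop :=
  match v with
  | Some n => exists N, forall M, N <= M -> occ w a 0 M = n
  | None => forall n, exists M, n < occ w a 0 M
  end.

Definition parikh_equiv (Sigma : finType) (w w' : oword Sigma) : Prop :=
  forall a : Sigma, exists v, parikh_is w a v /\ parikh_is w' a v.

Definition block_equiv (Sigma : finType) (k : nat) (w w' : oword Sigma) : Prop :=
  forall i (a : Sigma), occ w a (i * k) k = occ w' a (i * k) k.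

Definition J (Sigma : finType) (A : automaton Sigma) (w : oword Sigma) : Prop :=
  exists w', parikh_equiv w w' /\ accepts A w'.

Definition J_ex_box (Sigma : finType) (A : automaton Sigma) (w : oword Sigma) : Prop :=
  exists k, 1 <= k /\ exists w', block_equiv k w w' /\ accepts A w'.

From mathcomp Require Import all_boot boolp.
Set Implicit Arguments. Unset Strict Implicit. Unset Printing Implicit Defensive.

(* Up to Parikh equivalence, a word accepted by A is described by a finite
   prefix p and the set S of letters recurring in it.  The automaton B
   (box_automaton) accepts exactly the words p y such that A reads p into a
   state q from which it accepts some word over exactly S with every letter of
   S recurring, and y itself uses exactly S with every letter recurring
   (box_sound, box_complete; recurrence is checked by the rounds of
   rounds_completeP).
   - J_ex_box B <= J A: if w is k-block-equivalent to such a word p y, replace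
     y by the witness accepted from q; the result is accepted by A and has the
     Parikh vector of p y (same_shape_parikh), hence of w (block_equiv_parikh).
   - J A <= J_ex_box B: if w ~ u with u accepted by A, then past some N both
     words use exactly the letters S recurring in u (eventual_alphabet), and a
     long enough first block of w can be rearranged to start with the prefix of
     length N of u (rearrange_prefix); the result is block-equivalent to w and
     accepted by B. *)

Lemma uniform_bound (T : finType) (P : T -> nat -> Prop) :
  (forall t n n', n <= n' -> P t n -> P t n') ->
  (forall t, exists n, P t n) -> exists n, forall t, P t n.
Proof.
move=> P_up /choice [bound Pbound]; exists (\max_t bound t) => t.
exact: P_up (leq_bigmax t) (Pbound t).
Qed.

Lemma perm_complete (T : eqType) (p s : seq T) :
  (forall a, count_mem a p <= count_mem a s) -> exists rest, perm_eq (p ++ rest) s.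
Proof.
move=> /count_subseqP [p' sub perm_p]; have [rest perm_s] := perm_to_subseq sub.
by exists rest; rewrite perm_sym (permPl perm_s) perm_cat2r perm_sym.
Qed.

Section Words.
Variable Sigma : finType.
Implicit Types (f g u w x : oword Sigma) (a : Sigma) (S : {set Sigma}).

Lemma occS f a m k : occ f a m k.+1 = occ f a m k + (f (m + k) == a).
Proof. by rewrite /occ big_ord_recr. Qed.

Lemma occ_add f a M d : occ f a 0 (M + d) = occ f a 0 M + occ f a M d.
Proof.
elim: d => [|d IH]; first by rewrite addn0 /occ big_ord0 addn0.
by rewrite addnS !occS IH add0n addnA.
Qed.

Lemma occ_mono f a M M' : M <= M' -> occ f a 0 M <= occ f a 0 M'.
Proof. by move=> /subnKC <-; rewrite occ_add leq_addr. Qed.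

Lemma eq_occ f g a m k : (forall j, j < k -> f (m + j) = g (m + j)) ->
  occ f a m k = occ g a m k.
Proof. by move=> fg; apply: eq_bigr => j _; rewrite fg. Qed.

Definition factor f m k : seq Sigma := mkseq (fun j => f (m + j)) k.

Lemma occE f a m k : occ f a m k = count_mem a (factor f m k).
Proof.
elim: k => [|k IH]; first by rewrite /occ big_ord0.
rewrite occS IH /factor /mkseq -addn1 iotaD map_cat count_cat /= add0n.
by rewrite addn0 eq_sym.
Qed.

Lemma occ_pos f a m k : 0 < occ f a m k -> exists2 j, j < k & f (m + j) = a.
Proof.
rewrite occE -has_count has_pred1 => /mapP [j]; rewrite mem_iota => /andP [_ jk] ->.
by exists j.
Qed.

Lemma occ_frozen f a N : (forall i, f (N + i) != a) ->
  forall M, N <= M -> occ f a 0 M = occ f a 0 N.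
Proof.
move=> avoid M /subnKC <-; rewrite occ_add; apply/eqP.
rewrite -{2}(addn0 (occ _ _ _ _)) eqn_add2l.
by apply/eqP/big1 => j _; rewrite (negbTE (avoid j)).
Qed.

Lemma frozen_avoid f a N n : (forall M, N <= M -> occ f a 0 M = n) ->
  forall i, f (N + i) != a.
Proof.
move=> frozen i; apply/negP => /eqP fa.
have := frozen (N + i).+1 (leqW (leq_addr _ _)).
rewrite occS add0n fa eqxx frozen ?leq_addr // addn1 => /esym; exact: n_Sn.
Qed.

Definition recurs f a := forall n, exists2 i, n <= i & f i = a.

Definition shift f N : oword Sigma := fun i => f (N + i).

Definition agree f g N := forall i, i < N -> f i = g i.

Definition recurs_exactly S f := (forall i, f i \in S) /\ (forall a, a \in S -> recurs f a).

Lemma recurs_shift f N a : recurs (shift f N) a <-> recurs f a.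
Proof.
split=> rec n.
  have [i ni fi] := rec n; exists (N + i) => //; exact: leq_trans ni (leq_addl _ _).
have [i ni fi] := rec (N + n); have Ni : N <= i := leq_trans (leq_addr _ _) ni.
by exists (i - N); rewrite ?leq_subRL // /shift subnKC.
Qed.

Lemma recurs_eventually f g k a : (forall i, k <= i -> f i = g i) ->
  recurs f a -> recurs g a.
Proof.
move=> fg rec n; have [i ni fi] := rec (maxn n k).
by exists i; [exact: leq_trans (leq_maxl _ _) ni | rewrite -fg // (leq_trans (leq_maxr _ _) ni)].
Qed.

Lemma parikh_inf f a : parikh_is f a None <-> recurs f a.
Proof.
split=> [unb n | rec].
  have [M ltM] := unb (occ f a 0 n).
  have nM : n <= M.
    by rewrite leqNgt; apply: contraTN ltM => /ltnW/(occ_mono f a); rewrite -leqNgt.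
  move: ltM; rewrite -(subnKC nM) occ_add -{1}(addn0 (occ _ _ _ _)) ltn_add2l.
  by case/occ_pos => j _ fj; exists (n + j); rewrite ?leq_addr.
elim=> [|n [M ltM]].
  by have [i _ fi] := rec 0; exists i.+1; rewrite occS fi eqxx addn1.
have [i Mi fi] := rec M; exists i.+1.
by rewrite occS fi eqxx addn1 ltnS (leq_trans ltM) ?occ_mono.
Qed.

Lemma parikh_inf_fin f a n : parikh_is f a None -> ~ parikh_is f a (Some n).
Proof.
move=> unb [N frozen]; have [M ltM] := unb n.
move: ltM; rewrite -(frozen (maxn M N)) ?leq_maxr // ltnNge occ_mono ?leq_maxl //.
Qed.

Lemma same_shape_parikh f g N S : agree f g N ->
  recurs_exactly S (shift f N) -> recurs_exactly S (shift g N) -> parikh_equiv f g.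
Proof.
move=> fg [fS frec] [gS grec] a; case: (boolP (a \in S)) => aS.
  by exists None; split; apply/parikh_inf/(recurs_shift _ N); [exact: frec | exact: grec].
have avoid h : (forall i, h (N + i) \in S) -> forall i, h (N + i) != a.
  by move=> hS i; apply: contraNneq aS => <-.
exists (Some (occ f a 0 N)); split; exists N => M NM.
  exact: occ_frozen (avoid _ fS) _ NM.
rewrite (occ_frozen (avoid _ gS) NM); apply: esym; apply: eq_occ => j jN; exact: fg.
Qed.

Lemma block_prefix_occ k f g a : block_equiv k f g ->
  forall i, occ f a 0 (i * k) = occ g a 0 (i * k).
Proof.
move=> fg; elim=> [|i IH]; first by rewrite mul0n /occ !big_ord0.
by rewrite mulSn addnC !occ_add IH fg.
Qed.

Lemma block_equiv_parikh k f g a v : 0 < k -> block_equiv k f g ->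
  parikh_is g a v -> parikh_is f a v.
Proof.
move=> k_gt0 /block_prefix_occ fg; case: v => [n|] /= => [[N frozen] | unb].
  exists (N * k) => M NM; have N_M : N <= M %/ k by rewrite leq_divRL.
  apply/eqP; rewrite eqn_leq; apply/andP; split.
    apply: leq_trans (occ_mono f a (ltnW (ltn_ceil M k_gt0))) _.
    by rewrite fg frozen // (leq_trans _ (leq_pmulr _ k_gt0)) // ltnW.
  rewrite -(frozen (M %/ k * k)) -?fg ?occ_mono ?leq_divM //.
  exact: leq_trans N_M (leq_pmulr _ k_gt0).
move=> n; have [M ltM] := unb n; exists (M * k).
by rewrite fg (leq_trans ltM) // occ_mono // leq_pmulr.
Qed.

Lemma block_equiv_parikh_equiv k w x u : 0 < k -> block_equiv k w x ->
  parikh_equiv x u -> parikh_equiv w u.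
Proof.
move=> k_gt0 wx xu a; have [v [xv uv]] := xu a.
by exists v; split=> //; exact: block_equiv_parikh wx xv.
Qed.

Lemma eventual_alphabet w u : parikh_equiv w u ->
  exists S N, [/\ recurs_exactly S (shift u N), recurs_exactly S (shift w N)
    & forall a, a \notin S -> occ u a 0 N = occ w a 0 N].
Proof.
move=> wu; pose S := [set a | `[< recurs u a >]].
have inS a : reflect (recurs u a) (a \in S) by rewrite inE; exact: asboolP.
have [N frozen] : exists N, forall a, a \notin S ->
    exists n, forall M, N <= M -> occ u a 0 M = n /\ occ w a 0 M = n.
  apply: uniform_bound => [a n n' nn' Pn /Pn [c frozen] | a].
    by exists c => M /(leq_trans nn'); exact: frozen.
  case: (boolP (a \in S)) => aS; first by exists 0.
  have [[n|] [wv uv]] := wu a; last by case/negP: aS; apply/inS/parikh_inf.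
  have [[Nw fw] [Nu fu]] := (wv, uv).
  exists (maxn Nu Nw) => _; exists n => M; rewrite geq_max => /andP [? ?].
  by split; [exact: fu | exact: fw].
have tailS h : (forall a, a \notin S -> exists n, forall M, N <= M -> occ h a 0 M = n) ->
    forall i, shift h N i \in S.
  move=> hfrozen i; apply: contraT => /hfrozen [n /frozen_avoid avoid].
  by have := avoid i; rewrite /shift eqxx.
exists S, N; split.
- split; first by apply: tailS => a /frozen [n fr]; exists n => M /fr [].
  by move=> a /inS rec; apply/recurs_shift.
- split; first by apply: tailS => a /frozen [n fr]; exists n => M /fr [].
  move=> a /inS /parikh_inf urec; apply/recurs_shift/parikh_inf.
  have [[n|] [wv uv]] := wu a => //; by case: (parikh_inf_fin urec uv).
- move=> a /frozen [n fr]; have [-> ->] := fr N (leqnn N); done.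
Qed.

Definition splice (s : seq Sigma) w : oword Sigma := fun i => nth (w i) s i.

Lemma splice_block_equiv (s : seq Sigma) w k :
  perm_eq s (factor w 0 k) -> block_equiv k w (splice s w).
Proof.
move=> perm_s; have size_s : size s = k by rewrite (perm_size perm_s) size_mkseq.
move=> [|i] a; last first.
  apply: eq_occ => j _; rewrite /splice nth_default // size_s mulSn -addnA leq_addr //.
rewrite mul0n !occE; have -> : factor (splice s w) 0 k = s.
  rewrite -{2}(mkseq_nth (w 0) s) size_s /factor /mkseq; apply/eq_in_map => j.
  by rewrite mem_iota add0n => /andP [_ jk]; rewrite /splice (set_nth_default (w 0)) ?size_s.
by rewrite (permP perm_s).
Qed.

Lemma rearrange_prefix u w S N : recurs_exactly S (shift w N) ->
  (forall a, a \notin S -> occ u a 0 N = occ w a 0 N) ->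
  exists k w', [/\ 0 < k, block_equiv k w w', agree u w' N & recurs_exactly S (shift w' N)].
Proof.
move=> [wS wrec] out_eq.
have w_frozen a : a \notin S -> forall M, N <= M -> occ w a 0 M = occ w a 0 N.
  by move=> aS; apply: occ_frozen => i; apply: contraNneq aS => <-; exact: wS.
have [K enough] : exists K, forall a, occ u a 0 N <= occ w a 0 K.
  apply: uniform_bound => [a n n' nn' le_n | a]; first exact: leq_trans le_n (occ_mono _ _ nn').
  case: (boolP (a \in S)) => aS; last by exists N; rewrite out_eq.
  have /recurs_shift/parikh_inf unb := wrec a aS.
  by have [M ltM] := unb (occ u a 0 N); exists M; exact: ltnW.
pose k := maxn (maxn K N) 1; have Nk : N <= k by rewrite !leq_max leqnn orbT.
have [rest perm_rest] : exists rest, perm_eq (factor u 0 N ++ rest) (factor w 0 k).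
  apply: perm_complete => a; rewrite -!occE (leq_trans (enough a)) // occ_mono //.
  by rewrite !leq_max leqnn.
have size_u : size (factor u 0 N) = N by rewrite size_mkseq.
have restS a : a \in rest -> a \in S.
  apply: contraTT => aS; rewrite -has_pred1 has_count -leqNgt leqn0.
  have := permP perm_rest (pred1 a); rewrite count_cat -!occE w_frozen // -out_eq //.
  by move/eqP; rewrite -{2}(addn0 (occ _ _ _ _)) eqn_add2l.
exists k, (splice (factor u 0 N ++ rest) w); split.
- by rewrite leq_max orbC.
- exact: splice_block_equiv.
- by move=> i iN; rewrite /splice nth_cat size_u iN nth_mkseq.
split=> [i|a aS].
  rewrite /shift /splice nth_cat size_u ltnNge leq_addr /= addKn.
  case: (ltnP i (size rest)) => [/(mem_nth (w (N + i)))/restS // | ?].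
  by rewrite nth_default //; exact: wS.
apply/recurs_shift/(recurs_eventually (f := w) (k := k)); last exact/(recurs_shift w N)/wrec.
by move=> i ki; rewrite /splice nth_default // (perm_size perm_rest) size_mkseq.
Qed.

(* Round tracking: T collects the letters seen in the current round; once T
   equals S the round is complete and the next letter starts a new round. *)
Definition next_round S (T : {set Sigma}) a : {set Sigma} :=
  if T == S then [set a] else a |: T.

Fixpoint rounds S f n : {set Sigma} :=
  if n is n'.+1 then next_round S (rounds S f n') (f n') else S.

Lemma rounds_sub S f n : (forall i, f i \in S) -> rounds S f n \subset S.
Proof.
move=> fS; elim: n => [|n IH] /=; first exact: subxx.
rewrite /next_round; case: ifP => _; first by rewrite sub1set.
by rewrite subUset sub1set fS.
Qed.

Lemma rounds_completeP S f : (forall i, f i \in S) ->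
  (forall n, exists2 m, n <= m & rounds S f m = S) <-> (forall a, a \in S -> recurs f a).
Proof.
move=> fS; split=> [complete a aS n | rec n].
  apply: contrapT => norec.
  have avoid i : n <= i -> f i != a by move=> ni; apply/eqP => fa; apply: norec; exists i.
  have [m1 nm1 done1] := complete n.
  have notin d : a \notin rounds S f (m1 + d).+1.
    elim: d => [|d IH]; rewrite /= /next_round.
      by rewrite addn0 done1 eqxx inE eq_sym; apply: avoid.
    rewrite addnS; case: ifP => _; rewrite ?inE ?in_setU1 ?(negbTE IH) ?orbF eq_sym;
      by apply: avoid; rewrite -addnS (leq_trans nm1) ?leq_addr.
  have [m2 m12 done2] := complete m1.+1.
  by move: (notin (m2 - m1.+1)); rewrite -addSn subnKC // done2 aS.
apply: contrapT => incomplete.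
have never m : n <= m -> rounds S f m != S.
  by move=> nm; apply/eqP => eqS; apply: incomplete; exists m.
have seen d j : j < d -> f (n + j) \in rounds S f (n + d).
  elim: d => [|d IH] //; rewrite ltnS leq_eqVlt addnS /= /next_round.
  rewrite (negbTE (never _ (leq_addr _ _))) in_setU1 => /orP [/eqP -> | /IH ->].
    by rewrite eqxx.
  by rewrite orbT.
have [D allseen] : exists D, forall a, a \in S -> exists2 j, j < D & f (n + j) = a.
  apply: uniform_bound => [a d d' dd' Pd /Pd [j jd fj] | a].
    by exists j => //; exact: leq_trans jd dd'.
  case: (boolP (a \in S)) => aS; last by exists 0.
  have [i ni fi] := rec a aS n; exists (i - n).+1 => _; exists (i - n); by rewrite ?subnKC.
apply: (negP (never (n + D) (leq_addr _ _))); rewrite eqEsubset rounds_sub //=.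
by apply/subsetP => a /allseen [j jD <-]; exact: seen.
Qed.

End Words.

Section Automaton.
Variables (Sigma : finType) (A : automaton Sigma).
Implicit Types (u w x z : oword Sigma) (q : state A) (S : {set Sigma}).

Definition accepts_from q z := exists r : nat -> state A,
  [/\ r 0 = q, forall i, trans A (r i) (z i) (r i.+1) & forall n, exists i, n <= i /\ acc A (r i)].

Definition reaches x N q := exists r : nat -> state A,
  [/\ init A (r 0), forall i, i < N -> trans A (r i) (x i) (r i.+1) & r N = q].

Definition viable S q := exists2 z, accepts_from q z & recurs_exactly S z.

Definition concat x N z : oword Sigma := fun i => if i < N then x i else z (i - N).

Lemma reaches_agree x y N q : agree x y N -> reaches x N q -> reaches y N q.
Proof. by move=> xy [r [r0 rt rN]]; exists r; split=> // i iN; rewrite -xy ?rt. Qed.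

Lemma agree_concat x N z : agree x (concat x N z) N.
Proof. by move=> i iN; rewrite /concat iN. Qed.

Lemma shift_concat x N z : shift (concat x N z) N = z.
Proof. by apply: funext => i; rewrite /shift /concat ltnNge leq_addr /= addKn. Qed.

Lemma accepts_concat x N z q : reaches x N q -> accepts_from q z -> accepts A (concat x N z).
Proof.
move=> [r [r0 rt rN]] [s [s0 st sacc]].
exists (fun i => if i <= N then r i else s (i - N)); split=> //=; split=> [i|n].
  rewrite /concat; case: (ltngtP i N) => [iN | Ni | ->].
  - exact: rt.
  - by rewrite subSn; [exact: st | exact: ltnW].
  - by rewrite subSn // subnn rN -s0; exact: st.
have [i [ni si]] := sacc n.+1; exists (N + i); split.
  by rewrite (leq_trans (ltnW ni)) // leq_addl.
by rewrite leqNgt -{1}(addn0 N) ltn_add2l (leq_trans _ ni) //= addKn.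
Qed.

Lemma accepts_split u r N : accepting_run A u r ->
  reaches u N (r N) /\ accepts_from (r N) (shift u N).
Proof.
move=> [r0 [rt racc]]; split; first by exists r.
exists (fun i => r (N + i)); split=> [|i|n]; rewrite ?addn0 //; first by rewrite addnS.
have [i [ni ri]] := racc (N + n); exists (i - N); rewrite subnKC ?(leq_trans (leq_addr _ _) ni) //.
by rewrite leq_subRL ?(leq_trans (leq_addr _ _) ni).
Qed.

(* The automaton B of the theorem simulates A on a guessed prefix, then switches to a guessed
   set S (admissible only if viable S in the current state of A) and checks,
   round by round, that the rest of the word uses exactly S with every letter
   recurring: a state (S, T) is accepting when the current round T is complete. *)
Definition box_state : finType := (state A + {set Sigma} * {set Sigma})%type.

Definition box_init (s : box_state) : bool := if s is inl q then init A q else false.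

Definition box_acc (s : box_state) : bool := if s is inr (S1, T) then T == S1 else false.

Definition box_trans (s : box_state) (a : Sigma) (s' : box_state) : bool :=
  match s, s' with
  | inl q, inl q' => trans A q a q'
  | inl q, inr (S1, T) => `[< viable S1 q >] && (a \in S1) && (T == next_round S1 S1 a)
  | inr (S1, T), inr (S2, T') => (S2 == S1) && (a \in S1) && (T' == next_round S1 T a)
  | inr _, inl _ => false
  end.

Definition box_automaton : automaton Sigma :=
  @Automaton Sigma box_state box_init box_trans box_acc.

Lemma box_complete x N q S : reaches x N q -> viable S q ->
  recurs_exactly S (shift x N) -> accepts box_automaton x.
Proof.
move=> [r [r0 rt rN]] vS [xS xrec]; set f := shift x N.
have xS' i : N <= i -> x i \in S by move=> Ni; have := xS (i - N); rewrite /f /shift subnKC.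
exists (fun i => if i <= N then inl (r i) else inr (S, rounds S f (i - N))).
split=> //=; split=> [i|n].
  case: (ltngtP i N) => [iN | Ni | ->] /=; first exact: rt.
    rewrite subSn ?(ltnW Ni) //= xS' ?(ltnW Ni) // /f /shift subnKC ?(ltnW Ni) //.
    by rewrite !eq_refl.
  by rewrite subSn // subnn /= rN xS' // /f /shift addn0 eqxx !andbT; exact/asboolP.
have [m nm done_m] := (rounds_completeP xS).2 xrec n.+1.
exists (N + m); split; first by rewrite (leq_trans (ltnW nm)) ?leq_addl.
by rewrite leqNgt -{1}(addn0 N) ltn_add2l (leq_trans _ nm) //= addKn done_m.
Qed.

Definition in_prefix (s : box_state) : bool := if s is inl _ then true else false.

Lemma box_run_tail R x N S : (forall i, box_trans (R i) (x i) (R i.+1)) ->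
  R N.+1 = inr (S, rounds S (shift x N) 1) -> x N \in S ->
  forall d, R (N + d.+1) = inr (S, rounds S (shift x N) d.+1) /\ x (N + d) \in S.
Proof.
move=> Rt RN1 xN; elim=> [|d [RNd _]]; first by rewrite addn1 addn0.
rewrite [N + d.+2]addnS; have := Rt (N + d.+1); rewrite RNd /=.
case: (R _.+1) => // [[S2 T2]].
by case/andP => /andP [/eqP -> xS] /eqP ->.
Qed.

Lemma box_sound x : accepts box_automaton x ->
  exists N q S, [/\ reaches x N q, viable S q & recurs_exactly S (shift x N)].
Proof.
move=> [R [R0 [Rt Racc]]].
have [m switch first] : exists2 m, ~~ in_prefix (R m.+1) & forall i, i <= m -> in_prefix (R i).
  have has_switch : exists j, ~~ in_prefix (R j).
    by have [j [_ accj]] := Racc 0; exists j; move: accj; case: (R j).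
  case: (ex_minnP has_switch) => [[|m]]; first by case: (R 0) R0.
  move=> Rm min_m; exists m => // i im.
  by apply: contraT => /min_m; rewrite leqNgt ltnS im.
case RN : (R m) => [q|]; last by have := first m (leqnn m); rewrite RN.
case RN1 : (R m.+1) => [//|[S T]]; first by rewrite RN1 in switch.
have := Rt m; rewrite RN RN1 /= => /andP [/andP [/asboolP vS xN] /eqP T_def].
have RN1' : R m.+1 = inr (S, rounds S (shift x m) 1) by rewrite RN1 T_def /= /shift addn0.
have tail := box_run_tail Rt RN1' xN.
exists m, q, S; split=> //.
  exists (fun i => if R i is inl p then p else q); split; first by move: R0; case: (R 0).
    move=> i im; have := Rt i; have := first i (ltnW im); have := first i.+1 im.
    by case: (R i) => // ?; case: (R i.+1).
  by rewrite RN.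
have tailS i : shift x m i \in S by case: (tail i).
split=> //; apply/(rounds_completeP tailS) => n.
have [i [ni acci]] := Racc (m.+1 + n); have mi : m.+1 <= i by exact: leq_trans (leq_addr _ _) ni.
exists (i - m.+1).+1; first by apply: leqW; rewrite leq_subRL.
have [Ri _] := tail (i - m.+1); move: acci; rewrite -addSnnS subnKC // in Ri.
by rewrite Ri => /eqP.
Qed.

End Automaton.

Theorem theorem4 (Sigma : finType) (A : automaton Sigma) :
  exists B : automaton Sigma, forall w : oword Sigma, J_ex_box B w <-> J A w.
Proof.
exists (box_automaton A) => w; split.
- move=> [k [k_gt0 [x [wx /box_sound [N [q [S [reach [z acc_z shape_z] shape_x]]]]]]]].
  exists (concat x N z); split; last exact: accepts_concat reach acc_z.
  apply: block_equiv_parikh_equiv k_gt0 wx _.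
  apply: (same_shape_parikh (@agree_concat _ x N z) shape_x).
  by rewrite shift_concat.
- move=> [u [wu [r run]]].
  have [S [N [shape_u shape_w out_eq]]] := eventual_alphabet wu.
  have [k [w' [k_gt0 ww' uw' shape_w']]] := rearrange_prefix shape_w out_eq.
  have [reach acc_tail] := accepts_split N run.
  exists k; split=> //; exists w'; split=> //.
  apply: box_complete (reaches_agree uw' reach) _ shape_w'.
  by exists (shift u N).
Qed.
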